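(* If $\deg(e)\ge 3$ (where $e$ is the base of the natural logarithm, and $\deg(e)=\infty$ is allowed), then $e+\pi$ is a transcendental number.
   Context: Let $\overline{\mathbb{Q}}$ denote the field of algebraic numbers. For $n\ge 1$, an admissible domain in $\mathbb{R}^n$ is a subset of $\mathbb{R}^n$ which is a finite union of sets of the form $\{x\in\mathbb{R}^n : P_1(x)\,\square_1\, 0,\dots,P_r(x)\,\square_r\, 0\}$, where each $P_i$ is a polynomial with real algebraic coefficients and each $\square_i\in\{\ge,>\}$, and which has finite Lebesgue measure $\mathrm{vol}_n$. A real number $p$ is a real period if $p=\mathrm{vol}_n(\Sigma_1)-\mathrm{vol}_n(\Sigma_2)$ for some $n\ge1$ and admissible domains $\Sigma_1,\Sigma_2\subseteq\mathbb{R}^n$. The degree is defined as follows: $\deg(0)=0$; for a nonzero real period $p$, $\deg(p)$ is the least $n\ge 1$ such that $p=\mathrm{vol}_n(\Sigma_1)-\mathrm{vol}_n(\Sigma_2)$ with $\Sigma_1,\Sigma_2$ admissible domains in $\mathbb{R}^n$; for a real number that is not a period, $\deg(p)=\infty$, with $\infty$ larger than every integer. *)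

From Stdlib Require Import Reals List ZArith.
Import ListNotations.
Open Scope R_scope.

(** Real algebraic numbers: roots of a nonzero polynomial with integer
    coefficients.  A polynomial is the list of its coefficients
    [c0; c1; ...; cd] (constant term first). *)
Definition zpoly_eval (p : list Z) (x : R) : R :=
  fold_right (fun c acc => IZR c + x * acc) 0 p.

Definition is_algebraic (x : R) : Prop :=
  exists p : list Z, Exists (fun c => c <> 0%Z) p /\ zpoly_eval p x = 0.

Definition transcendental (x : R) : Prop := ~ is_algebraic x.

(** Points of R^n are lists of reals of length n. *)

(** Multivariate real polynomials: lists of monomials (coefficient,
    exponent vector); the monomial (c, [e1;...;ek]) evaluates at x to
    c * x1^e1 * ... * xk^ek (pairing coordinates and exponents
    positionally; missing exponents count as 0). *)
Definition mpoly := list (R * list nat).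

Definition monom_eval (e : list nat) (x : list R) : R :=
  fold_right (fun ye acc => (fst ye) ^ (snd ye) * acc) 1 (combine x e).

Definition mpoly_eval (P : mpoly) (x : list R) : R :=
  fold_right (fun m acc => fst m * monom_eval (snd m) x + acc) 0 P.

Definition mpoly_alg_coeffs (P : mpoly) : Prop :=
  Forall (fun m => is_algebraic (fst m)) P.

Definition sign_cond := (mpoly * bool)%type.

Definition sat_cond (c : sign_cond) (x : list R) : Prop :=
  if snd c then mpoly_eval (fst c) x >= 0 else mpoly_eval (fst c) x > 0.

(** A basic set {x in R^n : P_1(x) []_1 0, ..., P_r(x) []_r 0}. *)
Definition basic_set := list sign_cond.

Definition in_union (n : nat) (U : list basic_set) (x : list R) : Prop :=
  length x = n /\ Exists (fun B => Forall (fun c => sat_cond c x) B) U.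

Definition alg_union (U : list basic_set) : Prop :=
  Forall (fun B => Forall (fun c => mpoly_alg_coeffs (fst c)) B) U.

(** Lebesgue measure, via Lebesgue outer measure (which coincides with
    Lebesgue measure on the Borel, in particular semialgebraic, sets):
    the infimum of sum_k vol(B_k) over countable covers by closed boxes. *)
Definition box := list (R * R).  (* list of intervals [a_i, b_i] *)

Definition box_ok (n : nat) (b : box) : Prop :=
  length b = n /\ Forall (fun ab => fst ab <= snd ab) b.

Definition in_box (b : box) (x : list R) : Prop :=
  Forall2 (fun ab y => fst ab <= y <= snd ab) b x.

Definition box_vol (b : box) : R :=
  fold_right (fun ab acc => (snd ab - fst ab) * acc) 1 b.

Definition cover_sum (n : nat) (S : list R -> Prop) (s : R) : Prop :=
  exists B : nat -> box,
    (forall k, box_ok n (B k)) /\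
    (forall x, length x = n -> S x -> exists k, in_box (B k) x) /\
    infinite_sum (fun k => box_vol (B k)) s.

Definition vol_is (n : nat) (S : list R -> Prop) (v : R) : Prop :=
  (forall s, cover_sum n S s -> v <= s) /\
  (forall w, (forall s, cover_sum n S s -> w <= s) -> w <= v).

Definition admissible_vol (n : nat) (U : list basic_set) (v : R) : Prop :=
  alg_union U /\ vol_is n (in_union n U) v.

Definition period_in_dim (p : R) (n : nat) : Prop :=
  exists U1 U2 v1 v2,
    admissible_vol n U1 v1 /\ admissible_vol n U2 v2 /\ p = v1 - v2.

Definition real_period (p : R) : Prop :=
  exists n, (1 <= n)%nat /\ period_in_dim p n.

Definition deg_le (p : R) (n : nat) : Prop :=
  p = 0 \/ exists m, (1 <= m <= n)%nat /\ period_in_dim p m.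

Definition deg_ge (p : R) (k : nat) : Prop :=
  forall n, deg_le p n -> (k <= n)%nat.

(** Suppose [e + pi] were algebraic.  Then the rectangle [0, e + pi] x [0, 1] and the
    region under [4 / (1 + x^2)] over [0, 1] are both admissible domains in the plane, of
    areas [e + pi] and [pi = 4 atan 1], so [e] is a difference of two planar volumes and
    [deg e <= 2].

    The volumes are Lebesgue outer measures (infima of sums over countable box covers).
    An area is bounded above by an explicit finite cover, and below by an inner union of
    columns: any countable box cover of the columns may be enlarged by a summable margin to
    an open cover, which by compactness has a finite subcover, and a finite cover of the
    columns by rectangles has at least their area, by integrating the one-dimensional
    statement (a finite cover of an interval by intervals has at least its length) along
    vertical sections. *)

From Stdlib Require Import Reals Lra Lia List Classical.
Import ListNotations.
Open Scope R_scope.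

Fixpoint rsum (f : nat -> R) (n : nat) : R :=
  match n with O => 0 | S n' => rsum f n' + f n' end.

Lemma rsum_le_compat f g n :
  (forall k, (k < n)%nat -> f k <= g k) -> rsum f n <= rsum g n.
Proof.
  induction n as [|n IH]; simpl; intros Hfg; [lra|].
  assert (f n <= g n) by (apply Hfg; lia).
  assert (rsum f n <= rsum g n) by (apply IH; intros; apply Hfg; lia).
  lra.
Qed.

Lemma rsum_nonneg f n : (forall k, (k < n)%nat -> 0 <= f k) -> 0 <= rsum f n.
Proof.
  intros Hf. replace 0 with (rsum (fun _ => 0) n).
  - apply rsum_le_compat; auto.
  - clear. induction n; simpl; lra.
Qed.

Lemma rsum_ext f g n : (forall k, (k < n)%nat -> f k = g k) -> rsum f n = rsum g n.
Proof.
  induction n as [|n IH]; simpl; intros Hfg; [reflexivity|].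
  rewrite IH, Hfg; [reflexivity | lia | intros; apply Hfg; lia].
Qed.

Lemma rsum_plus f g n : rsum (fun k => f k + g k) n = rsum f n + rsum g n.
Proof. induction n; simpl; lra. Qed.

Lemma rsum_mult_r f x n : rsum f n * x = rsum (fun k => f k * x) n.
Proof. induction n; simpl; lra. Qed.

Lemma rsum_term_le f n k :
  (forall j, (j < n)%nat -> 0 <= f j) -> (k < n)%nat -> f k <= rsum f n.
Proof.
  induction n as [|n IH]; intros Hf Hk; [lia|]. simpl.
  assert (0 <= f n) by (apply Hf; lia).
  destruct (Nat.eq_dec k n) as [->|Hkn].
  - assert (0 <= rsum f n) by (apply rsum_nonneg; intros; apply Hf; lia). lra.
  - assert (f k <= rsum f n) by (apply IH; [intros; apply Hf | ]; lia). lra.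
Qed.

Lemma sum_f_R0_rsum f n : sum_f_R0 f n = rsum f (S n).
Proof. induction n as [|n IH]; simpl in *; [lra|]. rewrite IH. reflexivity. Qed.

Lemma rsum_telescope g n : rsum (fun i => g (S i) - g i) n = g n - g O.
Proof. induction n as [|n IH]; simpl; [ring|]. rewrite IH. ring. Qed.

Lemma rsum_geometric eps n : rsum (fun k => eps / 2 ^ S k) n = eps - eps / 2 ^ n.
Proof.
  induction n as [|n IH]; [simpl; field|].
  change (rsum (fun k => eps / 2 ^ S k) (S n))
    with (rsum (fun k => eps / 2 ^ S k) n + eps / 2 ^ S n).
  rewrite IH. assert (2 ^ n <> 0) by (apply pow_nonzero; lra). simpl. field. auto.
Qed.

Lemma rsum_stationary f m n :
  (forall k, (m <= k)%nat -> f k = 0) -> (m <= n)%nat -> rsum f n = rsum f m.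
Proof.
  intros Hf. induction n as [|n IH]; intros Hmn.
  - replace m with O by lia. reflexivity.
  - destruct (Nat.eq_dec m (S n)) as [->|]; [reflexivity|].
    simpl. rewrite IH, Hf by lia. ring.
Qed.

Lemma rsum_le_infinite_sum f s n :
  (forall k, 0 <= f k) -> infinite_sum f s -> rsum f n <= s.
Proof.
  intros Hf Hs. apply Rle_trans with (rsum f (S n)).
  - simpl. specialize (Hf n). lra.
  - rewrite <- sum_f_R0_rsum. apply growing_ineq; auto.
    intros m. simpl. specialize (Hf (S m)). lra.
Qed.

Lemma infinite_sum_stationary f m :
  (forall k, (m <= k)%nat -> f k = 0) -> infinite_sum f (rsum f m).
Proof.
  intros Hf eps Heps. exists m. intros n Hn. unfold R_dist.
  rewrite sum_f_R0_rsum, (rsum_stationary f m (S n)), Rminus_diag, Rabs_R0 by (auto; lia).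
  exact Heps.
Qed.

(** * Covering inequalities for intervals and rectangles *)

Ltac case_Rle :=
  repeat match goal with
  | |- context [Rle_dec ?x ?y] => destruct (Rle_dec x y)
  | H : context [Rle_dec ?x ?y] |- _ => destruct (Rle_dec x y)
  end.

Definition on_interval (a b w t : R) : R :=
  if Rle_dec a t then if Rle_dec t b then w else 0 else 0.

Definition overlap (a b c d : R) : R := Rmax 0 (Rmin b d - Rmax a c).

Lemma overlap_nonneg a b c d : 0 <= overlap a b c d.
Proof. apply Rmax_l. Qed.

Lemma overlap_le a b c d : a <= b -> overlap a b c d <= b - a.
Proof. intros. unfold overlap, Rmax, Rmin. case_Rle; lra. Qed.

Lemma overlap_split a b c p d :
  c <= p -> p <= d -> overlap a b c p + overlap a b p d = overlap a b c d.
Proof. intros. unfold overlap, Rmax, Rmin. case_Rle; lra. Qed.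

Lemma overlap_inner a b c d : a <= c -> c <= d -> d <= b -> overlap a b c d = d - c.
Proof. intros. unfold overlap, Rmax, Rmin. case_Rle; lra. Qed.

Section IntervalCover.

Variables (m : nat) (A B W : nat -> R).
Hypothesis W_nonneg : forall k, 0 <= W k.

Definition weight_at (t : R) : R := rsum (fun k => on_interval (A k) (B k) (W k) t) m.

Definition covered_length (c d : R) : R := rsum (fun k => W k * overlap (A k) (B k) c d) m.

Definition breaks_within (P : list R) (c d : R) : Prop :=
  forall k, (k < m)%nat -> (c < A k < d -> In (A k) P) /\ (c < B k < d -> In (B k) P).

Lemma covered_length_nonneg c d : 0 <= covered_length c d.
Proof.
  apply rsum_nonneg. intros k _.
  apply Rmult_le_pos; [apply W_nonneg | apply overlap_nonneg].
Qed.

Lemma covered_length_split c p d :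
  c <= p -> p <= d -> covered_length c p + covered_length p d = covered_length c d.
Proof.
  intros. unfold covered_length. rewrite <- rsum_plus. apply rsum_ext. intros k _.
  rewrite <- (overlap_split (A k) (B k) c p d) by lra. ring.
Qed.

Lemma breaks_within_cons p P c d c' d' :
  breaks_within (p :: P) c d -> c <= c' -> d' <= d -> ~ (c' < p < d') ->
  breaks_within P c' d'.
Proof.
  intros Hbr Hc Hd Hp k Hk. destruct (Hbr k Hk) as [HA HB].
  split; intros Hin.
  - destruct (HA ltac:(lra)) as [Heq|]; [rewrite Heq in Hp; tauto | assumption].
  - destruct (HB ltac:(lra)) as [Heq|]; [rewrite Heq in Hp; tauto | assumption].
Qed.

Lemma breaks_within_nil_length c d h :
  c <= d -> breaks_within [] c d ->
  (forall t, c <= t <= d -> h <= weight_at t) -> h * (d - c) <= covered_length c d.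
Proof.
  intros Hcd Hbr Hh.
  destruct (Req_dec c d) as [<-|Hne].
  { rewrite Rminus_diag, Rmult_0_r. apply covered_length_nonneg. }
  (* With no endpoint inside (c, d), an interval meeting the midpoint contains [c, d]. *)
  set (t := (c + d) / 2).
  apply Rle_trans with (weight_at t * (d - c)).
  { apply Rmult_le_compat_r; [lra | apply Hh; unfold t; lra]. }
  unfold weight_at. rewrite rsum_mult_r. apply rsum_le_compat. intros k Hk.
  destruct (Hbr k Hk) as [HA HB]. simpl in HA, HB.
  pose proof (W_nonneg k). pose proof (overlap_nonneg (A k) (B k) c d).
  unfold on_interval. destruct (Rle_dec (A k) t); [destruct (Rle_dec t (B k))|].
  - rewrite overlap_inner; [lra | | lra |].
    + destruct (Rle_dec (A k) c); [assumption|]. exfalso. apply HA. unfold t in *. lra.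
    + destruct (Rle_dec d (B k)); [assumption|]. exfalso. apply HB. unfold t in *. lra.
  - rewrite Rmult_0_l. apply Rmult_le_pos; lra.
  - rewrite Rmult_0_l. apply Rmult_le_pos; lra.
Qed.

Lemma breaks_within_length P : forall c d h,
  c <= d -> breaks_within P c d ->
  (forall t, c <= t <= d -> h <= weight_at t) -> h * (d - c) <= covered_length c d.
Proof.
  induction P as [|p P IH]; intros c d h Hcd Hbr Hh.
  { apply breaks_within_nil_length; assumption. }
  destruct (Rlt_dec c p); [destruct (Rlt_dec p d)|].
  - rewrite <- (covered_length_split c p d) by lra.
    replace (h * (d - c)) with (h * (p - c) + h * (d - p)) by ring.
    apply Rplus_le_compat; apply IH; try lra;
      try (eapply breaks_within_cons; [eassumption | | | ]; lra);
      intros; apply Hh; lra.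
  - apply IH; auto. eapply breaks_within_cons; [eassumption | | |]; lra.
  - apply IH; auto. eapply breaks_within_cons; [eassumption | | |]; lra.
Qed.

Fixpoint endpoints (n : nat) : list R :=
  match n with O => [] | S n' => A n' :: B n' :: endpoints n' end.

Lemma breaks_within_endpoints c d : breaks_within (endpoints m) c d.
Proof.
  intros k Hk. cut (In (A k) (endpoints m) /\ In (B k) (endpoints m)); [tauto|].
  induction m as [|n IH]; [lia|]. simpl.
  destruct (Nat.eq_dec k n) as [->|]; [tauto|].
  destruct IH; [lia | tauto].
Qed.

Lemma interval_cover_length c d h :
  c <= d -> (forall t, c <= t <= d -> h <= weight_at t) ->
  h * (d - c) <= covered_length c d.
Proof.
  intros. apply (breaks_within_length (endpoints m)); auto.
  apply breaks_within_endpoints.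
Qed.

End IntervalCover.

Lemma rect_cover_area (a b c d : nat -> R) M u v h :
  (forall k, c k <= d k) -> u <= v -> 0 <= h ->
  (forall x y, u <= x <= v -> 0 <= y <= h ->
     exists k, (k < M)%nat /\ a k <= x <= b k /\ c k <= y <= d k) ->
  h * (v - u) <= covered_length M a b (fun k => d k - c k) u v.
Proof.
  intros Hcd Huv Hh Hcov.
  assert (Hind_nonneg : forall x k, 0 <= on_interval (a k) (b k) 1 x).
  { intros. unfold on_interval. case_Rle; lra. }
  apply interval_cover_length; [intros k; specialize (Hcd k); lra | assumption |].
  intros x Hx.
  (* Integrate the vertical section at [x]: the y-intervals of the rectangles over [x]
     cover [0, h]. *)
  assert (Hsection : 1 * (h - 0) <=
     covered_length M c d (fun k => on_interval (a k) (b k) 1 x) 0 h).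
  { apply interval_cover_length; [auto | assumption |].
    intros y Hy. destruct (Hcov x y Hx Hy) as [k [Hk [Hxk Hyk]]].
    apply Rle_trans with (on_interval (c k) (d k) (on_interval (a k) (b k) 1 x) y).
    - unfold on_interval. case_Rle; lra.
    - apply (rsum_term_le
        (fun j => on_interval (c j) (d j) (on_interval (a j) (b j) 1 x) y)); [|assumption].
      intros j _. unfold on_interval at 1. case_Rle; auto; lra. }
  eapply Rle_trans; [|apply rsum_le_compat with
    (f := fun k => on_interval (a k) (b k) 1 x * overlap (c k) (d k) 0 h)].
  - unfold covered_length in Hsection. lra.
  - intros k _. pose proof (overlap_le (c k) (d k) 0 h (Hcd k)).
    pose proof (overlap_nonneg (c k) (d k) 0 h).
    unfold on_interval. case_Rle; lra.
Qed.

Definition in_columns (δ : R) (H : nat -> R) (n : nat) (x y : R) : Prop :=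
  exists i, (i < n)%nat /\ INR i * δ <= x <= INR (S i) * δ /\ 0 <= y <= H i.

Lemma columns_cover_area (a b c d : nat -> R) M δ H n :
  (forall k, a k <= b k) -> (forall k, c k <= d k) -> 0 < δ -> (forall i, 0 <= H i) ->
  (forall x y, in_columns δ H n x y ->
     exists k, (k < M)%nat /\ a k <= x <= b k /\ c k <= y <= d k) ->
  rsum (fun i => δ * H i) n <= rsum (fun k => (b k - a k) * (d k - c k)) M.
Proof.
  intros Hab Hcd Hδ HH Hcov.
  assert (Hcols : forall n', (n' <= n)%nat ->
    rsum (fun i => δ * H i) n' <= covered_length M a b (fun k => d k - c k) 0 (INR n' * δ)).
  { induction n' as [|n' IH]; intros Hn.
    - apply covered_length_nonneg. intros k. specialize (Hcd k). lra.
    - assert (Hmid : 0 <= INR n' * δ <= INR (S n') * δ)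
        by (rewrite S_INR; pose proof (pos_INR n'); nra).
      rewrite <- (covered_length_split M a b _ 0 (INR n' * δ)) by lra.
      simpl rsum. apply Rplus_le_compat; [apply IH; lia|].
      replace (δ * H n') with (H n' * (INR (S n') * δ - INR n' * δ)) by (rewrite S_INR; ring).
      apply rect_cover_area; auto; [lra|].
      intros x y Hx Hy. apply Hcov. exists n'. auto. }
  eapply Rle_trans; [apply Hcols; lia|]. apply rsum_le_compat. intros k _.
  pose proof (overlap_le (a k) (b k) 0 (INR n * δ) (Hab k)).
  pose proof (overlap_nonneg (a k) (b k) 0 (INR n * δ)). specialize (Hcd k). nra.
Qed.

(** * Compactness *)

Lemma uniform_index_on_interval (G : nat -> R -> Prop) p q :
  p <= q -> (forall N M t, (N <= M)%nat -> G N t -> G M t) ->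
  (forall t, p <= t <= q ->
     exists N δ, 0 < δ /\ forall t', Rabs (t' - t) < δ -> G N t') ->
  exists N, forall t, p <= t <= q -> G N t.
Proof.
  intros Hpq Hmono Hloc.
  (* The supremum of the [s] for which one index serves all of [p, s] must be [q]. *)
  set (E := fun s => p <= s <= q /\ exists N, forall t, p <= t <= s -> G N t).
  assert (Ep : E p).
  { split; [lra|]. destruct (Hloc p ltac:(lra)) as [N [δ [Hδ HG]]]. exists N.
    intros t Ht. apply HG. replace (t - p) with 0 by lra. rewrite Rabs_R0. assumption. }
  destruct (completeness E) as [σ [Hub Hleast]].
  { exists q. intros s [Hs _]. lra. }
  { exists p. exact Ep. }
  assert (Hpσ : p <= σ) by (apply Hub; assumption).
  assert (Hσq : σ <= q) by (apply Hleast; intros s [Hs _]; lra).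
  destruct (Hloc σ ltac:(lra)) as [N0 [δ [Hδ HG0]]].
  assert (Hnear : exists s, E s /\ σ - δ / 2 < s).
  { apply NNPP. intros Hnone.
    assert (σ <= σ - δ / 2); [|lra].
    apply Hleast. intros s Es. apply Rnot_lt_le. intros Hs. apply Hnone. eauto. }
  destruct Hnear as [s [[Hs [N1 HG1]] Hsσ]].
  set (s' := Rmin (σ + δ / 2) q).
  assert (Es' : E s').
  { split; [unfold s', Rmin; case_Rle; lra|].
    exists (max N0 N1). intros t Ht.
    destruct (Rle_dec t s).
    - apply Hmono with N1; [lia | apply HG1; lra].
    - apply Hmono with N0; [lia|]. apply HG0.
      assert (t <= σ + δ / 2) by (unfold s', Rmin in Ht; case_Rle; lra).
      apply Rabs_def1; lra. }
  assert (s' <= σ) by (apply Hub; assumption).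
  assert (Hq : s' = q) by (unfold s', Rmin in *; case_Rle; lra).
  destruct Es' as [_ [N HN]]. exists N. intros t Ht. apply HN. lra.
Qed.

Lemma rect_finite_subcover (a b c d : nat -> R) u v p q :
  u <= v -> p <= q ->
  (forall x y, u <= x <= v -> p <= y <= q -> exists k, a k < x < b k /\ c k < y < d k) ->
  exists N, forall x y, u <= x <= v -> p <= y <= q ->
    exists k, (k < N)%nat /\ a k < x < b k /\ c k < y < d k.
Proof.
  intros Huv Hpq Hcov.
  assert (Hinv : forall N M, (N <= M)%nat -> / INR (S M) <= / INR (S N)).
  { intros. apply Rinv_le_contravar; [apply lt_0_INR; lia | apply le_INR; lia]. }
  destruct (uniform_index_on_interval (fun N x => forall y, p <= y <= q ->
     exists k, (k < N)%nat /\ a k < x < b k /\ c k < y < d k) u v Huv) as [N HN].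
  - intros N M t HNM HG y Hy. destruct (HG y Hy) as [k [Hk Hk']]. exists k. split; [lia | auto].
  - intros x Hx.
    (* Along the vertical section at [x], require a margin [/ (N + 1)] around [x] as well,
       so that the same rectangles cover a vertical strip around [x]. *)
    destruct (uniform_index_on_interval (fun N y => exists k, (k < N)%nat /\
        a k + / INR (S N) < x < b k - / INR (S N) /\ c k < y < d k) p q Hpq) as [N HN].
    + intros N M t HNM [k [Hk [H1 H2]]]. exists k. pose proof (Hinv N M HNM).
      split; [lia | split; [lra | assumption]].
    + intros y Hy. destruct (Hcov x y Hx Hy) as [k [Hxk Hyk]].
      destruct (archimed_cor1 (Rmin (x - a k) (b k - x))) as [N0 [HN0 HN0pos]].
      { unfold Rmin; case_Rle; lra. }
      exists (max (S k) N0), (Rmin (y - c k) (d k - y)).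
      split; [unfold Rmin; case_Rle; lra|].
      intros y' Hy'. exists k. split; [lia|].
      assert (/ INR (S (max (S k) N0)) <= / INR N0).
      { apply Rinv_le_contravar; [apply lt_0_INR; lia | apply le_INR; lia]. }
      apply Rabs_def2 in Hy'. unfold Rmin in HN0, Hy'. case_Rle; lra.
    + exists N, (/ INR (S N)). split; [apply Rinv_0_lt_compat, lt_0_INR; lia|].
      intros x' Hx' y Hy. destruct (HN y Hy) as [k [Hk [H1 H2]]]. exists k.
      apply Rabs_def2 in Hx'. split; [assumption | split; [lra | assumption]].
  - exists N. intros x y Hx Hy. exact (HN x Hx y Hy).
Qed.

Lemma columns_finite_subcover (a b c d : nat -> R) δ H n :
  0 < δ -> (forall i, 0 <= H i) ->
  (forall x y, in_columns δ H n x y -> exists k, a k < x < b k /\ c k < y < d k) ->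
  exists N, forall x y, in_columns δ H n x y ->
    exists k, (k < N)%nat /\ a k < x < b k /\ c k < y < d k.
Proof.
  intros Hδ HH. induction n as [|n IH]; intros Hcov.
  { exists O. intros x y [i [Hi _]]. lia. }
  destruct IH as [N1 HN1].
  { intros x y [i [Hi Hxy]]. apply Hcov. exists i. split; [lia | assumption]. }
  destruct (rect_finite_subcover a b c d (INR n * δ) (INR (S n) * δ) 0 (H n)) as [N2 HN2].
  - rewrite S_INR. lra.
  - apply HH.
  - intros x y Hx Hy. apply Hcov. exists n. auto.
  - exists (max N1 N2). intros x y [i [Hi [Hx Hy]]].
    destruct (Nat.eq_dec i n) as [->|Hin].
    + destruct (HN2 x y Hx Hy) as [k [Hk Hk']]. exists k. split; [lia | assumption].
    + destruct (HN1 x y) as [k [Hk Hk']].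
      * exists i. split; [lia | auto].
      * exists k. split; [lia | assumption].
Qed.

(** * Outer measure in the plane *)

Definition box_x (bx : box) : R * R := nth 0 bx (0, 0).
Definition box_y (bx : box) : R * R := nth 1 bx (0, 0).

Lemma box_ok_2_shape bx : box_ok 2 bx ->
  bx = [box_x bx; box_y bx] /\
  fst (box_x bx) <= snd (box_x bx) /\ fst (box_y bx) <= snd (box_y bx).
Proof.
  intros [Hlen Hle]. destruct bx as [|I [|J [|]]]; try discriminate.
  inversion Hle as [|? ? HI HJ]. inversion HJ. auto.
Qed.

Lemma in_box_2 (I J : R * R) x y :
  in_box [I; J] [x; y] <-> fst I <= x <= snd I /\ fst J <= y <= snd J.
Proof.
  unfold in_box. split.
  - intros Hin. inversion Hin as [|? ? ? ? HI HJ]. inversion HJ. auto.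
  - intros [HI HJ]. constructor; [assumption | constructor; [assumption | constructor]].
Qed.

Lemma box_vol_2 (I J : R * R) : box_vol [I; J] = (snd I - fst I) * (snd J - fst J).
Proof. unfold box_vol. simpl. ring. Qed.

Lemma box_ok_2_intro a b c d : a <= b -> c <= d -> box_ok 2 [(a, b); (c, d)].
Proof.
  intros. split; [reflexivity|].
  constructor; [assumption | constructor; [assumption | constructor]].
Qed.

Lemma cover_sum_finite n S (B : nat -> box) m :
  (forall k, box_ok n (B k)) -> (forall k, (m <= k)%nat -> box_vol (B k) = 0) ->
  (forall x, length x = n -> S x -> exists k, in_box (B k) x) ->
  cover_sum n S (rsum (fun k => box_vol (B k)) m).
Proof.
  intros Hok Hzero Hcov. exists B. split; [assumption | split; [assumption |]].
  apply infinite_sum_stationary. assumption.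
Qed.

Lemma small_margins (D1 D2 : nat -> R) eps :
  0 < eps -> (forall k, 0 <= D1 k) -> (forall k, 0 <= D2 k) ->
  exists r : nat -> R, (forall k, 0 < r k) /\
    forall k, (D1 k + 2 * r k) * (D2 k + 2 * r k) <= D1 k * D2 k + eps / 2 ^ S k.
Proof.
  intros Heps HD1 HD2.
  set (K k := 2 * D1 k + 2 * D2 k + 4).
  exists (fun k => Rmin 1 (eps / (2 ^ S k * K k))).
  assert (Hq : forall k, 0 < eps / (2 ^ S k * K k)).
  { intros k. specialize (HD1 k). specialize (HD2 k).
    apply Rdiv_lt_0_compat, Rmult_lt_0_compat; [| apply pow_lt |]; unfold K; lra. }
  split.
  - intros k. specialize (Hq k). unfold Rmin. case_Rle; lra.
  - intros k. specialize (Hq k). specialize (HD1 k). specialize (HD2 k).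
    set (r := Rmin 1 _).
    assert (Hr1 : 0 < r <= 1) by (unfold r, Rmin; case_Rle; lra).
    assert (HrK : r * K k <= eps / 2 ^ S k).
    { apply Rle_trans with (eps / (2 ^ S k * K k) * K k).
      - apply Rmult_le_compat_r; [unfold K; lra | apply Rmin_r].
      - right. field. split; [apply pow_nonzero; lra | unfold K; lra]. }
    assert (r * r <= r) by nra. unfold K in HrK. nra.
Qed.

Lemma cover_sum_ge_columns (S : list R -> Prop) δ H n s :
  0 < δ -> (forall i, 0 <= H i) -> (forall x y, in_columns δ H n x y -> S [x; y]) ->
  cover_sum 2 S s -> rsum (fun i => δ * H i) n <= s.
Proof.
  intros Hδ HH HS [B [Hok [Hcov Hsum]]].
  set (a k := fst (box_x (B k))). set (b k := snd (box_x (B k))).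
  set (c k := fst (box_y (B k))). set (d k := snd (box_y (B k))).
  assert (HB : forall k, B k = [box_x (B k); box_y (B k)] /\ a k <= b k /\ c k <= d k)
    by (intros k; apply box_ok_2_shape, Hok).
  assert (Hvol : forall k, box_vol (B k) = (b k - a k) * (d k - c k))
    by (intros k; rewrite (proj1 (HB k)); apply box_vol_2).
  apply Rle_plus_epsilon. intros eps Heps.
  destruct (small_margins (fun k => b k - a k) (fun k => d k - c k) eps Heps)
    as [r [Hr Hrarea]]; [intros k; destruct (HB k); lra.. |].
  (* Slightly enlarged open boxes still cover, so finitely many of them do. *)
  destruct (columns_finite_subcover (fun k => a k - r k) (fun k => b k + r k)
              (fun k => c k - r k) (fun k => d k + r k) δ H n) as [N HN]; auto.
  { intros x y Hxy. destruct (Hcov [x; y] eq_refl (HS x y Hxy)) as [k Hk].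
    rewrite (proj1 (HB k)), in_box_2 in Hk. exists k. specialize (Hr k). unfold a, b, c, d. lra. }
  apply Rle_trans with
    (rsum (fun k => (b k + r k - (a k - r k)) * (d k + r k - (c k - r k))) N).
  { apply columns_cover_area; auto.
    - intros k. destruct (HB k). specialize (Hr k). lra.
    - intros k. destruct (HB k). specialize (Hr k). lra.
    - intros x y Hxy. destruct (HN x y Hxy) as [k [Hk Hin]]. exists k. split; [assumption | lra]. }
  apply Rle_trans with (rsum (fun k => box_vol (B k)) N + (eps - eps / 2 ^ N)).
  { rewrite <- rsum_geometric, <- rsum_plus. apply rsum_le_compat. intros k _.
    rewrite Hvol. specialize (Hrarea k). simpl in Hrarea |- *. lra. }
  assert (rsum (fun k => box_vol (B k)) N <= s).
  { apply rsum_le_infinite_sum; [|assumption].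
    intros k. rewrite Hvol. destruct (HB k). nra. }
  assert (0 < eps / 2 ^ N) by (apply Rdiv_lt_0_compat; [| apply pow_lt]; lra).
  lra.
Qed.

Lemma vol_is_2_intro (S : list R -> Prop) v :
  (forall eps, 0 < eps -> exists δ H n, 0 < δ /\ (forall i, 0 <= H i) /\
     (forall x y, in_columns δ H n x y -> S [x; y]) /\ v - eps <= rsum (fun i => δ * H i) n) ->
  (forall eps, 0 < eps -> exists s, cover_sum 2 S s /\ s <= v + eps) ->
  vol_is 2 S v.
Proof.
  intros Hinner Houter. split.
  - intros s Hs. apply Rle_plus_epsilon. intros eps Heps.
    destruct (Hinner eps Heps) as [δ [H [n [Hδ [HH [HS Harea]]]]]].
    pose proof (cover_sum_ge_columns S δ H n s Hδ HH HS Hs). lra.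
  - intros w Hw. apply Rle_plus_epsilon. intros eps Heps.
    destruct (Houter eps Heps) as [s [Hs Hsv]]. specialize (Hw s Hs). lra.
Qed.

(** * The two admissible domains *)

Lemma is_algebraic_IZR z : is_algebraic (IZR z).
Proof.
  exists [(- z)%Z; 1%Z]. split.
  - apply Exists_cons. right. apply Exists_cons. left. discriminate.
  - cbn. rewrite opp_IZR. ring.
Qed.

Definition poly_x : mpoly := [(1, [1%nat; 0%nat])].
Definition poly_y : mpoly := [(1, [0%nat; 1%nat])].
Definition poly_const_minus_x (a : R) : mpoly := [(a, [0%nat; 0%nat]); (-1, [1%nat; 0%nat])].
Definition poly_one_minus_y : mpoly := [(1, [0%nat; 0%nat]); (-1, [0%nat; 1%nat])].
Definition poly_pi_bound : mpoly :=
  [(4, [0%nat; 0%nat]); (-1, [0%nat; 1%nat]); (-1, [2%nat; 1%nat])].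

Definition rect_domain (a : R) : list basic_set :=
  [[(poly_x, true); (poly_const_minus_x a, true); (poly_y, true); (poly_one_minus_y, true)]].

Definition pi_domain : list basic_set :=
  [[(poly_x, true); (poly_const_minus_x 1, true); (poly_y, true); (poly_pi_bound, true)]].

Lemma rect_domain_alg a : is_algebraic a -> alg_union (rect_domain a).
Proof.
  intros Ha. unfold alg_union, rect_domain, mpoly_alg_coeffs.
  repeat constructor; try exact Ha; apply (is_algebraic_IZR 1) || apply (is_algebraic_IZR (-1)).
Qed.

Lemma pi_domain_alg : alg_union pi_domain.
Proof.
  unfold alg_union, pi_domain, mpoly_alg_coeffs.
  repeat constructor;
    apply (is_algebraic_IZR 1) || apply (is_algebraic_IZR (-1)) || apply (is_algebraic_IZR 4).
Qed.

Lemma in_union_2_single (B : basic_set) x y :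
  in_union 2 [B] [x; y] <-> Forall (fun c => sat_cond c [x; y]) B.
Proof.
  unfold in_union. rewrite Exists_cons, Exists_nil. simpl. tauto.
Qed.

Lemma in_rect_domain a x y :
  in_union 2 (rect_domain a) [x; y] <-> 0 <= x <= a /\ 0 <= y <= 1.
Proof.
  unfold rect_domain. rewrite in_union_2_single, !Forall_cons_iff, Forall_nil_iff.
  unfold sat_cond. cbn. split.
  - intros [? [? [? [? _]]]]. lra.
  - intros. repeat split; lra.
Qed.

Definition pi_integrand (x : R) : R := 4 / (1 + x ^ 2).

Lemma pi_integrand_pos x : 0 < pi_integrand x.
Proof. unfold pi_integrand. apply Rdiv_lt_0_compat; nra. Qed.

Lemma pi_integrand_decreasing x y : 0 <= x <= y -> pi_integrand y <= pi_integrand x.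
Proof.
  intros. unfold pi_integrand, Rdiv. apply Rmult_le_compat_l; [lra|].
  apply Rinv_le_contravar; nra.
Qed.

Lemma in_pi_domain x y :
  in_union 2 pi_domain [x; y] <-> 0 <= x <= 1 /\ 0 <= y <= pi_integrand x.
Proof.
  unfold pi_domain. rewrite in_union_2_single, !Forall_cons_iff, Forall_nil_iff.
  unfold sat_cond, pi_integrand. cbn.
  assert (Hden : 0 < 1 + x * (x * 1)) by nra.
  assert (Hdiv : y <= 4 / (1 + x * (x * 1)) <-> y * (1 + x * (x * 1)) <= 4).
  { split; intros Hy.
    - apply Rmult_le_compat_r with (r := 1 + x * (x * 1)) in Hy; [|lra].
      unfold Rdiv in Hy. rewrite Rmult_assoc, Rinv_l in Hy; [lra | lra].
    - apply Rmult_le_reg_r with (1 + x * (x * 1)); [assumption|].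
      unfold Rdiv. rewrite Rmult_assoc, Rinv_l; lra. }
  split.
  - intros [? [? [? [? _]]]]. repeat split; try apply Hdiv; lra.
  - intros [? [? Hy]]. apply Hdiv in Hy. repeat split; lra.
Qed.

Lemma rect_domain_vol a : 0 < a -> vol_is 2 (in_union 2 (rect_domain a)) a.
Proof.
  intros Ha. apply vol_is_2_intro.
  - intros eps Heps. exists a, (fun _ => 1), 1%nat.
    split; [assumption | split; [intros; lra | split]].
    + intros x y [i [Hi [Hx Hy]]]. replace i with O in Hx by lia.
      apply in_rect_domain. simpl in Hx. lra.
    + simpl. lra.
  - intros eps Heps.
    set (B k := match k with O => [(0, a); (0, 1)] | S _ => [(0, 0); (0, 0)] end).
    exists (rsum (fun k => box_vol (B k)) 1). split.
    + apply cover_sum_finite.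
      * intros [|k]; apply box_ok_2_intro; lra.
      * intros [|k] Hk; [lia |]. unfold B. rewrite box_vol_2. simpl. ring.
      * intros pt Hlen Hpt. destruct pt as [|x [|y [|]]]; try discriminate.
        apply in_rect_domain in Hpt. exists O. apply in_box_2. simpl. lra.
    + unfold B, box_vol. simpl. lra.
Qed.

Lemma atan_increment_bounds s t : 0 <= s < t ->
  (t - s) * pi_integrand t <= 4 * (atan t - atan s) <= (t - s) * pi_integrand s.
Proof.
  intros Hst.
  destruct (MVT_cor2 atan (fun x => / (1 + x ^ 2)) s t ltac:(lra)
              (fun c _ => derivable_pt_lim_atan c)) as [c [Hc Hcst]].
  rewrite Hc. unfold pi_integrand, Rdiv.
  assert (/ (1 + t ^ 2) <= / (1 + c ^ 2)) by (apply Rinv_le_contravar; nra).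
  assert (/ (1 + c ^ 2) <= / (1 + s ^ 2)) by (apply Rinv_le_contravar; nra).
  split; nra.
Qed.

Definition pi_lower_sum (n : nat) : R :=
  rsum (fun i => / INR n * pi_integrand (INR (S i) * / INR n)) n.

Definition pi_upper_sum (n : nat) : R :=
  rsum (fun i => / INR n * pi_integrand (INR i * / INR n)) n.

Lemma pi_riemann_bounds n : (1 <= n)%nat -> pi_lower_sum n <= PI <= pi_upper_sum n.
Proof.
  intros Hn. set (δ := / INR n).
  assert (Hδ : 0 < δ) by (apply Rinv_0_lt_compat, lt_0_INR; lia).
  assert (Hnδ : INR n * δ = 1) by (apply Rinv_r, not_0_INR; lia).
  assert (Hpi : PI = rsum (fun i => 4 * atan (INR (S i) * δ) - 4 * atan (INR i * δ)) n).
  { rewrite (rsum_telescope (fun i => 4 * atan (INR i * δ))), Hnδ.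
    simpl. rewrite Rmult_0_l, atan_0, atan_1. field. }
  assert (Hstep : forall i, 0 <= INR i * δ < INR (S i) * δ /\ INR (S i) * δ - INR i * δ = δ).
  { intros i. rewrite S_INR. pose proof (pos_INR i). split; [split|]; nra. }
  rewrite Hpi. unfold pi_lower_sum, pi_upper_sum. fold δ.
  split; apply rsum_le_compat; intros i _; destruct (Hstep i) as [Hi Hlen];
    pose proof (atan_increment_bounds _ _ Hi) as Hb; rewrite Hlen in Hb; lra.
Qed.

Lemma pi_upper_lower_gap n : (1 <= n)%nat -> pi_upper_sum n = pi_lower_sum n + 2 * / INR n.
Proof.
  intros Hn. unfold pi_upper_sum, pi_lower_sum. set (δ := / INR n).
  assert (Hnδ : INR n * δ = 1) by (apply Rinv_r, not_0_INR; lia).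
  (* The two sums differ by telescoping: [δ * (pi_integrand 0 - pi_integrand 1) = 2 δ]. *)
  pose proof (rsum_telescope (fun i => - (δ * pi_integrand (INR i * δ))) n) as Ht.
  cbv beta in Ht. rewrite Hnδ, Rmult_0_l in Ht.
  replace (pi_integrand 0) with 4 in Ht by (unfold pi_integrand; field).
  replace (pi_integrand 1) with 2 in Ht by (unfold pi_integrand; field).
  replace (rsum (fun i => δ * pi_integrand (INR i * δ)) n)
    with (rsum (fun i => δ * pi_integrand (INR (S i) * δ)) n +
          rsum (fun i => - (δ * pi_integrand (INR (S i) * δ))
                         - - (δ * pi_integrand (INR i * δ))) n).
  - rewrite Ht. ring.
  - rewrite <- rsum_plus. apply rsum_ext. intros. ring.
Qed.

Lemma exists_column_index n δ x :
  (1 <= n)%nat -> 0 < δ -> 0 <= x <= INR n * δ ->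
  exists i, (i < n)%nat /\ INR i * δ <= x <= INR (S i) * δ.
Proof.
  intros Hn Hδ. induction n as [|n IH]; [lia|]. intros Hx.
  destruct (Nat.eq_dec n 0) as [->|Hn0].
  - exists O. simpl in *. split; [lia | lra].
  - destruct (Rle_dec x (INR n * δ)).
    + destruct IH as [i [Hi Hix]]; [lia | pose proof (pos_INR n); nra |].
      exists i. split; [lia | assumption].
    + exists n. split; [lia | lra].
Qed.

Lemma pi_domain_vol : vol_is 2 (in_union 2 pi_domain) PI.
Proof.
  assert (Hfine : forall eps, 0 < eps -> exists n, (1 <= n)%nat /\ 2 * / INR n < eps).
  { intros eps Heps. destruct (archimed_cor1 (eps / 2)) as [n [Hn Hn1]]; [lra|].
    exists n. split; [lia | lra]. }
  apply vol_is_2_intro; intros eps Heps; destruct (Hfine eps Heps) as [n [Hn Hsmall]];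
    pose proof (pi_riemann_bounds n Hn); pose proof (pi_upper_lower_gap n Hn);
    unfold pi_lower_sum, pi_upper_sum in *; set (δ := / INR n) in *;
    assert (Hδ : 0 < δ) by (apply Rinv_0_lt_compat, lt_0_INR; lia);
    assert (Hnδ : INR n * δ = 1) by (apply Rinv_r, not_0_INR; lia).
  - exists δ, (fun i => pi_integrand (INR (S i) * δ)), n.
    split; [assumption | split; [intros; left; apply pi_integrand_pos | split; [|lra]]].
    intros x y [i [Hi [Hx Hy]]]. apply in_pi_domain.
    assert (INR (S i) * δ <= 1).
    { rewrite <- Hnδ. apply Rmult_le_compat_r; [lra | apply le_INR; lia]. }
    pose proof (pos_INR i).
    split; [nra | split; [lra|]].
    eapply Rle_trans; [apply Hy | apply pi_integrand_decreasing; nra].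
  - set (B k := if Nat.ltb k n
                then [(INR k * δ, INR (S k) * δ); (0, pi_integrand (INR k * δ))]
                else [(0, 0); (0, 0)]).
    exists (rsum (fun k => box_vol (B k)) n). split.
    + apply cover_sum_finite.
      * intros k. unfold B. destruct (Nat.ltb k n); apply box_ok_2_intro; try lra.
        -- rewrite S_INR. lra.
        -- left. apply pi_integrand_pos.
      * intros k Hk. unfold B. rewrite (proj2 (Nat.ltb_ge k n) Hk), box_vol_2. simpl. ring.
      * intros pt Hlen Hpt. destruct pt as [|x [|y [|]]]; try discriminate.
        apply in_pi_domain in Hpt.
        destruct (exists_column_index n δ x) as [i [Hi Hix]]; [assumption..| lra |].
        exists i. unfold B. rewrite (proj2 (Nat.ltb_lt i n) Hi). apply in_box_2. simpl.
        split; [assumption | split; [lra|]].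
        eapply Rle_trans; [apply Hpt | apply pi_integrand_decreasing].
        pose proof (pos_INR i). nra.
    + rewrite (rsum_ext _ (fun i => δ * pi_integrand (INR i * δ))); [lra|].
      intros k Hk. unfold B. rewrite (proj2 (Nat.ltb_lt k n) Hk), box_vol_2.
      cbn [fst snd]. rewrite S_INR. ring.
Qed.

Lemma exp_1_period_dim_2 : is_algebraic (exp 1 + PI) -> period_in_dim (exp 1) 2.
Proof.
  intros Halg.
  assert (Hpos : 0 < exp 1 + PI) by (pose proof (exp_pos 1); pose proof PI_RGT_0; lra).
  exists (rect_domain (exp 1 + PI)), pi_domain, (exp 1 + PI), PI.
  split; [split; [apply rect_domain_alg, Halg | apply rect_domain_vol, Hpos] |].
  split; [split; [apply pi_domain_alg | apply pi_domain_vol] | ring].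
Qed.

Theorem corollary5p4 : deg_ge (exp 1) 3 -> transcendental (exp 1 + PI).
Proof.
  intros Hdeg Halg.
  assert (Hle : deg_le (exp 1) 2).
  { right. exists 2%nat. split; [lia | apply exp_1_period_dim_2, Halg]. }
  specialize (Hdeg 2%nat Hle). lia.
Qed.
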